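(* Let $I \subseteq R$ be a nonzero $\mathscr{D}(R,V)$-submodule of $R$. There exists a natural number $\ell \geq 0$ such that $I = \pi^\ell R$.
   Context: Let $(V, \pi V, k)$ be a DVR of mixed characteristic $(0,p)$ (i.e. $V$ has characteristic zero, maximal ideal generated by $\pi$, and residue field $k$ of characteristic $p>0$), and let $R$ be either $V[[x_1, \ldots, x_n]]$ or $V[x_1, \ldots, x_n]$ for some $n \geq 0$. $\mathscr{D}(R,V)$ denotes the ring of $V$-linear differential operators on $R$; it is generated over $R$ by the operators $\partial_i^{[t]} = \frac{1}{t!}\frac{\partial^t}{\partial x_i^t}$. *)

From HB Require Import structures.
From mathcomp Require Import all_boot all_order all_algebra.
From mathcomp Require Import mpoly.
Set Implicit Arguments. Unset Strict Implicit. Unset Printing Implicit Defensive.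
Import Order.TTheory GRing.Theory Num.Theory.
Local Open Scope ring_scope.

Definition is_DVR_uniformizer (V : idomainType) (pi : V) : Prop :=
  [/\ pi != 0, pi \isn't a GRing.unit &
      forall x : V, x != 0 ->
        exists u : V, exists k : nat, u \is a GRing.unit /\ x = u * pi ^+ k].

(* Mixed characteristic (0,p): char V = 0, and the residue field V/piV *)
(* has characteristic p, i.e. p is prime and p lies in pi V.          *)
Definition mixed_char (V : idomainType) (pi : V) (p : nat) : Prop :=
  [/\ [pchar V] =i pred0, prime p & exists c : V, p%:R = pi * c].

(* Formal power series V[[x_1..x_n]]: coefficient functions on       *)
(* monomials 'X_{1..n}.                                              *)
Definition pseries (n : nat) (V : idomainType) := 'X_{1..n} -> V.

Definition ps0 n (V : idomainType) : pseries n V := fun _ => 0.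
Definition psC n (V : idomainType) (c : V) : pseries n V := fun m => if m == 0%MM then c else 0.
Definition ps_add n (V : idomainType) (f g : pseries n V) : pseries n V := fun m => f m + g m.
Definition ps_mul n (V : idomainType) (f g : pseries n V) : pseries n V := fun m =>
  \sum_(a : 'X_{1..n < (mdeg m).+1}) \sum_(b : 'X_{1..n < (mdeg m).+1})
     if ((val a + val b)%MM == m) then f a * g b else 0.
(* divided-power derivative d_i^[t] = (1/t!) d^t/dx_i^t :            *)
(* coefficient of x^m in d_i^[t] f is C(m_i + t, t) f_{m + t e_i}.   *)
Definition ps_dderiv n (V : idomainType) (i : 'I_n) (t : nat) (f : pseries n V) : pseries n V :=
  fun m => 'C(m i + t, t)%:R * f (m + U_(i) *+ t)%MM.

(* I is a nonzero D(R,V)-submodule of R = V[[x]] (D(R,V) is generated  *)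
(* over R by the d_i^[t], so stability = additive subgroup stable     *)
(* under multiplication by R and under all d_i^[t]).                  *)
Definition ps_Dsubmodule n (V : idomainType) (I : pseries n V -> Prop) : Prop :=
  [/\ I (@ps0 n V),
      forall f g, I f -> I g -> I (ps_add f g),
      forall r f, I f -> I (ps_mul r f) &
      forall i t f, I f -> I (ps_dderiv i t f)].

Definition mdderiv n (V : idomainType) (i : 'I_n) (t : nat) (p : {mpoly V[n]})
  : {mpoly V[n]} :=
  \sum_(m <- msupp p) ('C(m i, t)%:R * p@_m) *: 'X_[m - U_(i) *+ t].

Definition mp_Dsubmodule n (V : idomainType) (I : {mpoly V[n]} -> Prop) : Prop :=
  [/\ I 0,
      forall f g, I f -> I g -> I (f + g),
      forall r f, I f -> I (r * f) &
      forall i t f, I f -> I (mdderiv i t f)].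

From mathcomp Require Import all_boot all_order all_algebra.
From mathcomp Require Import mpoly.
From Stdlib Require Import Classical FunctionalExtensionality.
Set Implicit Arguments. Unset Strict Implicit. Unset Printing Implicit Defensive.
Import Order.TTheory GRing.Theory.
Local Open Scope ring_scope.

(* Let l be the least pi-adic valuation of a coefficient of an element of I.
   Every element of I is then pi^l times an element of R, so it suffices to
   show that pi^l lies in I.  The divided power d_i^[t] with t = m_i moves the
   coefficient at m to the monomial m - m_i e_i with binomial factor
   C(t, t) = 1, so no integer ever has to be inverted.  In V[[x]] this yields
   g = pi^l h in I with h(0) a unit; h is invertible and pi^l = h^-1 g.  In
   V[x], applying the d_i^[t] to a monomial of f that is maximal for
   divisibility yields the constant coefficient of f there, and induction along
   the monomial order puts every coefficient of f in I. *)

Lemma ex_minn_classic (P : nat -> Prop) :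
  (exists k, P k) -> exists2 k, P k & forall j, P j -> (k <= j)%N.
Proof.
case=> k; elim/ltn_ind: k => k IH Pk.
have [[j Pj ltjk]|no_smaller] := classic (exists2 j, P j & (j < k)%N).
  exact: IH ltjk Pj.
by exists k => // j Pj; rewrite leqNgt; apply/negP => ltjk; apply: no_smaller; exists j.
Qed.

Lemma uniformizer_min_valuation (V : idomainType) (pi : V) (C : V -> Prop) :
  is_DVR_uniformizer pi -> (exists2 c, C c & c != 0) ->
  exists l, (exists2 u, u \is a GRing.unit & C (u * pi ^+ l))
            /\ forall c, C c -> exists q, c = pi ^+ l * q.
Proof.
case=> _ _ dvr [c Cc nz_c].
pose P k := exists2 u, u \is a GRing.unit & C (u * pi ^+ k).
have [k Pk] : exists k, P k.
  by have [u [k [uU def_c]]] := dvr _ nz_c; exists k, u; rewrite -?def_c.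
have [l Pl l_min] := ex_minn_classic (ex_intro _ k Pk).
exists l; split=> // c' Cc'; have [->|nz_c'] := eqVneq c' 0; first by exists 0; rewrite mulr0.
have [u [k' [uU def_c']]] := dvr _ nz_c'.
have lek' : (l <= k')%N by apply: l_min; exists u; rewrite -?def_c'.
by exists (u * pi ^+ (k' - l)); rewrite def_c' mulrCA -exprD subnKC.
Qed.

Lemma exists_cofactor_fun (T : Type) (R : pzRingType) (a : R) (g : T -> R) :
  (forall t, exists q, g t = a * q) -> exists h : T -> R, forall t, g t = a * h t.
Proof.
move=> dvd_g; have dvd_g' t : exists q, g t == a * q.
  by have [q ->] := dvd_g t; exists q.
by exists (fun t => xchoose (dvd_g' t)) => t; apply/eqP/(xchooseP (dvd_g' t)).
Qed.

Section Multinomials.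
Variable n : nat.
Implicit Types (m : 'X_{1..n}) (i : 'I_n).

Lemma mnm_exists_pos m : m != 0%MM -> exists i, (0 < m i)%N.
Proof.
move=> nz_m; apply: NNPP => no_pos; case/eqP: nz_m; apply/mnmP => i.
by rewrite mnm0E; apply/eqP; rewrite -leqn0 leqNgt; apply/negP => pos; apply: no_pos; exists i.
Qed.

Lemma mnm_subUK m i t : (t <= m i)%N -> (m - U_(i) *+ t + U_(i) *+ t)%MM = m.
Proof.
move=> le_t; apply/mnmP => j; rewrite mnmDE mnmBE mulmnE mnm1E.
by case: eqP => [<-|_]; rewrite ?mul1n ?mul0n ?subnK ?subn0 ?addn0.
Qed.

Lemma mnm_subU_self m i : (m - U_(i) *+ m i)%MM i = 0%N.
Proof. by rewrite mnmBE mulmnE mnm1E eqxx mul1n subnn. Qed.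

Lemma mdeg_subU_lt m i : (0 < m i)%N -> (mdeg (m - U_(i) *+ m i) < mdeg m)%N.
Proof.
move=> pos; rewrite -[X in (_ < mdeg X)%N](@mnm_subUK m i (m i)) //.
by rewrite mdegD mdegMn mdeg1 mul1n -[X in (X < _)%N]addn0 ltn_add2l.
Qed.

Lemma mdeg_lt_addr m1 m2 : (m1 + m2 != m1)%MM -> (mdeg m1 < mdeg (m1 + m2))%N.
Proof.
move=> ne; rewrite mdegD -[X in (X < _)%N]addn0 ltn_add2l lt0n mdeg_eq0.
by apply: contra ne => /eqP ->; rewrite addm0.
Qed.

End Multinomials.

Section PowerSeries.
Variables (n : nat) (V : idomainType).
Local Notation ps := (pseries n V).
Implicit Types (f g h r : ps) (m : 'X_{1..n}).

Lemma sum_bmnm_pick (d : nat) m0 (F : 'X_{1..n} -> V) : (mdeg m0 < d)%N ->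
  \sum_(a : 'X_{1..n < d}) (if val a == m0 then F (val a) else 0) = F m0.
Proof.
move=> lt_m0; rewrite (bigD1 (BMultinom lt_m0)) //= eqxx big1 ?addr0 // => a ne.
by case: eqP => // eq_a; case/eqP: ne; apply/val_inj.
Qed.

Lemma ps_mulCl (c : V) r m : ps_mul (psC c) r m = c * r m.
Proof.
rewrite /ps_mul (eq_bigr (fun a : 'X_{1..n < _} =>
  if val a == 0%MM then c * r m else 0)); first by rewrite (sum_bmnm_pick (fun=> c * r m)) ?mdeg0.
move=> a _; rewrite /psC -[bmnm a]/(val a); case: eqP => [->|_].
  rewrite (eq_bigr (fun b : 'X_{1..n < _} => if val b == m then c * r (val b) else 0)).
    exact: (sum_bmnm_pick (fun b => c * r b)).
  by move=> b _; rewrite add0m.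
by rewrite big1 // => b _; rewrite mul0r if_same.
Qed.

Lemma ps_mulCr (c : V) r m : ps_mul r (psC c) m = r m * c.
Proof.
rewrite /ps_mul (eq_bigr (fun a : 'X_{1..n < _} =>
  if val a == m then r (val a) * c else 0)); first exact: (sum_bmnm_pick (fun a => r a * c)).
move=> a _; rewrite (eq_bigr (fun b : 'X_{1..n < _} =>
  if val b == 0%MM then (if val a == m then r (val a) * c else 0) else 0)).
  by rewrite (sum_bmnm_pick (fun=> if val a == m then r (val a) * c else 0)) ?mdeg0.
move=> b _; rewrite /psC -[bmnm b]/(val b).
by case: (eqVneq (val b) 0%MM) => [->|_]; rewrite ?addm0 // mulr0 if_same.
Qed.

Lemma ps_mulC_psC (c : V) r : ps_mul (psC c) r = ps_mul r (psC c).
Proof. by apply: functional_extensionality => m; rewrite ps_mulCl ps_mulCr mulrC. Qed.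

Lemma ps_mulZr (c : V) r g h : (forall m, g m = c * h m) ->
  forall m, ps_mul r g m = c * ps_mul r h m.
Proof.
move=> def_g m; rewrite /ps_mul mulr_sumr; apply: eq_bigr => a _.
rewrite mulr_sumr; apply: eq_bigr => b _.
by case: ifP; rewrite ?mulr0 // def_g mulrCA.
Qed.

Definition ps_mul_lower f g m : V :=
  \sum_(a : 'X_{1..n < (mdeg m).+1}) \sum_(b : 'X_{1..n < (mdeg m).+1})
     if ((val a + val b)%MM == m) && (val a != m) then f (val a) * g (val b) else 0.

Lemma ps_mulE f g m : ps_mul f g m = f m * g 0%MM + ps_mul_lower f g m.
Proof.
have split_if (A B : bool) (x : V) :
    (if A then x else 0) = (if A && B then x else 0) + (if A && ~~ B then x else 0).
  by case: A; case: B; rewrite ?addr0 ?add0r.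
rewrite /ps_mul /ps_mul_lower.
under eq_bigr => a _ do under eq_bigr => b _ do rewrite (split_if _ (val a == m)).
under eq_bigr => a _ do rewrite big_split /=.
rewrite big_split /=; congr (_ + _).
rewrite (eq_bigr (fun a : 'X_{1..n < _} => if val a == m then f (val a) * g 0%MM else 0)).
  exact: (sum_bmnm_pick (fun a => f a * g 0%MM)).
move=> a _; case: (eqVneq (val a) m) => [eq_a|_]; last by rewrite big1 // => b _; rewrite andbF.
rewrite (eq_bigr (fun b : 'X_{1..n < _} => if val b == 0%MM then f (val a) * g (val b) else 0)).
  by rewrite (sum_bmnm_pick (fun b => f (val a) * g b)) ?mdeg0.
move=> b _; rewrite andbT -[bmnm a]/(val a) -[bmnm b]/(val b) eq_a.
by rewrite -[X in _ == X]addm0 (inj_eq (@addmI _ m)).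
Qed.

Lemma ps_mul_lower_ext f1 f2 g m :
  (forall a, (mdeg a < mdeg m)%N -> f1 a = f2 a) ->
  ps_mul_lower f1 g m = ps_mul_lower f2 g m.
Proof.
move=> eq_f; apply: eq_bigr => a _; apply: eq_bigr => b _.
case: ifP => // /andP[/eqP def_m ne]; rewrite eq_f //.
by have := @mdeg_lt_addr _ (val a) (val b); rewrite def_m eq_sym; apply.
Qed.

Section Inverse.
Variable h : ps.

(* Solves [(k * h)_m = (m == 0)] for [k_m] from the coefficients of [k] of
   lower degree; [d] only bounds the recursion depth. *)
Fixpoint ps_inv_approx (d : nat) : ps :=
  if d is d'.+1 then
    fun m => (h 0%MM)^-1 * ((m == 0%MM)%:R - ps_mul_lower (ps_inv_approx d') h m)
  else fun _ => 0.

Lemma ps_inv_approx_stable d e m : (mdeg m < d)%N -> (mdeg m < e)%N ->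
  ps_inv_approx d m = ps_inv_approx e m.
Proof.
elim: d e m => [//|d IH] [//|e] m /= lt_d lt_e; congr (_ * (_ - _)).
by apply: ps_mul_lower_ext => a lt_a; apply: IH; apply: leq_trans lt_a _.
Qed.

Definition ps_inv : ps := fun m => ps_inv_approx (mdeg m).+1 m.

Lemma ps_mulVr : h 0%MM \is a GRing.unit -> ps_mul ps_inv h = psC 1.
Proof.
move=> h0U; apply: functional_extensionality => m; rewrite ps_mulE.
rewrite (@ps_mul_lower_ext _ (ps_inv_approx (mdeg m))); last first.
  by move=> a lt_a; apply: ps_inv_approx_stable.
by rewrite /ps_inv /= mulrC mulVKr // subrK /psC; case: (m == 0%MM).
Qed.

End Inverse.

Lemma ps_Dsubmodule_coef0 (I : ps -> Prop) f m : ps_Dsubmodule I -> I f ->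
  exists2 g, I g & g 0%MM = f m.
Proof.
case=> _ _ _ Ider; have [d] := ubnP (mdeg m); elim: d m f => [//|d IH] m f lt_m If.
have [->|nz_m] := eqVneq m 0%MM; first by exists f.
have [i pos] := mnm_exists_pos nz_m.
have [g Ig g0] := IH _ _ (leq_trans (mdeg_subU_lt pos) lt_m) (Ider i (m i) f If).
by exists g; rewrite // g0 /ps_dderiv mnm_subU_self add0n binn mul1r mnm_subUK.
Qed.

Lemma ps_Dsubmodule_eq_pi_ideal (pi : V) : is_DVR_uniformizer pi ->
  forall I : ps -> Prop, ps_Dsubmodule I -> (exists f, I f /\ f <> @ps0 n V) ->
  exists l : nat, forall f, I f <-> exists r, f = ps_mul (psC (pi ^+ l)) r.
Proof.
move=> dvr I HI [f0 [If0 nz_f0]]; have [pi0 _ _] := dvr; have [_ _ Imul _] := HI.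
have [m0 nz_f0m0] : exists m, f0 m != 0.
  apply: NNPP => all0; apply: nz_f0; apply: functional_extensionality => m.
  by apply/eqP/negPn/negP => nz; apply: all0; exists m.
pose C c := exists2 f, I f & exists m, f m = c.
have [|l [[u uU [f If [m fm]]] dvdC]] := uniformizer_min_valuation (C := C) dvr.
  by exists (f0 m0) => //; exists f0 => //; exists m0.
have dvdI g : I g -> exists h, forall m, g m = pi ^+ l * h m.
  by move=> Ig; apply: exists_cofactor_fun => m'; apply: dvdC; exists g => //; exists m'.
have [g Ig g0] := ps_Dsubmodule_coef0 m HI If.
have [h def_g] := dvdI g Ig.
have h0 : h 0%MM = u.
  apply: (mulfI (expf_neq0 l pi0)).
  by rewrite -def_g g0 fm mulrC.
have Ipil : I (psC (pi ^+ l)).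
  suff <- : ps_mul (ps_inv h) g = psC (pi ^+ l) by apply: Imul.
  apply: functional_extensionality => m'.
  rewrite (ps_mulZr _ def_g) ps_mulVr ?h0 // /psC.
  by case: (m' == 0%MM); rewrite ?mulr1 ?mulr0.
exists l => f'; split=> [If'|[r ->]]; last by rewrite ps_mulC_psC; apply: Imul.
have [r def_f'] := dvdI f' If'; exists r.
by apply: functional_extensionality => m'; rewrite ps_mulCl.
Qed.

End PowerSeries.

Section Polynomials.
Variables (n : nat) (V : idomainType).
Implicit Types (f : {mpoly V[n]}) (m k : 'X_{1..n}).

Lemma mcoeff_mdderiv i t f k :
  (mdderiv i t f)@_k = 'C(k i + t, t)%:R * f@_(k + U_(i) *+ t)%MM.
Proof.
set K := (k + U_(i) *+ t)%MM; rewrite /mdderiv raddf_sum /=.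
rewrite (eq_bigr (fun m => if m == K then 'C(k i + t, t)%:R * f@_m else 0)); last first.
  move=> m _; rewrite mcoeffZ mcoeffX.
  have [->|ne] := eqVneq m K.
    by rewrite /K addmK eqxx mnmDE mulmnE mnm1E eqxx mul1n mulr1.
  case: eqP => [def_k|_]; last by rewrite mulr0.
  have lt_t : (m i < t)%N.
    by rewrite ltnNge; apply/negP => le_t; case/eqP: ne; rewrite /K -def_k mnm_subUK.
  by rewrite bin_small // !mul0r.
have [K_supp|K_supp] := boolP (K \in msupp f).
  by rewrite (bigD1_seq K) ?msupp_uniq //= eqxx big1 ?addr0 // => m /negbTE ->.
rewrite big_seq big1 => [|m m_supp]; last by case: eqP => // def_m; rewrite -def_m m_supp in K_supp.
by move: K_supp; rewrite mcoeff_msupp negbK => /eqP ->; rewrite mulr0.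
Qed.

Lemma mp_Dsubmodule_coef_top (I : {mpoly V[n]} -> Prop) f m :
  mp_Dsubmodule I -> I f -> (forall m', f@_m' != 0 -> (m <= m')%MM -> m' = m) ->
  I (f@_m)%:MP.
Proof.
case=> _ _ _ Ider; have [d] := ubnP (mdeg m); elim: d m f => [//|d IH] m f lt_m If m_top.
have [m0|nz_m] := eqVneq m 0%MM.
  have -> : (f@_m)%:MP = f; last by [].
  apply/mpolyP => k; rewrite mcoeffC m0; have [->|nz_k] := eqVneq k 0%MM; first by rewrite mulr1.
  rewrite mulr0; apply/esym/eqP/negP => /negP nz; case/eqP: nz_k; rewrite -m0.
  by apply: m_top nz _; apply/mnm_lepP => j; rewrite m0 mnm0E.
have [i pos] := mnm_exists_pos nz_m.
have -> : f@_m = (mdderiv i (m i) f)@_(m - U_(i) *+ m i)%MM.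
  by rewrite mcoeff_mdderiv mnm_subU_self add0n binn mul1r mnm_subUK.
apply: IH (Ider _ _ _ If) _ => [|k nz le_k]; first exact: leq_trans (mdeg_subU_lt pos) lt_m.
rewrite mcoeff_mdderiv in nz; apply: (@addIm _ (U_(i) *+ m i)%MM); rewrite mnm_subUK //.
apply: m_top; first by apply: contraNneq nz => ->; rewrite mulr0.
rewrite -{1}(@mnm_subUK _ m i (m i)) //; apply/mnm_lepP => j.
by rewrite !mnmDE leq_add2r; apply: (mnm_lepP le_k).
Qed.

Lemma mp_Dsubmodule_coefC (I : {mpoly V[n]} -> Prop) f k :
  mp_Dsubmodule I -> I f -> I (f@_k)%:MP.
Proof.
move=> HI; have [I0 Iadd Imul _] := HI; elim/mleadrect: f => f IH If.
have [->|nz_f] := eqVneq f 0; first by rewrite mcoeff0 mpolyC0.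
set M := mlead f.
have IfM : I (f@_M)%:MP.
  apply: (mp_Dsubmodule_coef_top HI If) => m' nz le_m'.
  by apply: le_anti; rewrite msupp_le_mlead ?mcoeff_msupp // lem_leo.
have [->//|neq] := eqVneq k M.
set q := f - f@_M *: 'X_[M].
have Iq : I q by rewrite /q -mul_mpolyC -mulrN mulrC; apply: Iadd => //; apply: Imul.
have -> : f@_k = q@_k by rewrite /q mcoeffB mcoeffZ mcoeffX eq_sym (negbTE neq) mulr0 subr0.
have [->|nz_q] := eqVneq q 0; first by rewrite mcoeff0 mpolyC0.
by apply: IH => //; apply: ltm_mleadD.
Qed.

Lemma mp_Dsubmodule_eq_pi_ideal (pi : V) : is_DVR_uniformizer pi ->
  forall I : {mpoly V[n]} -> Prop, mp_Dsubmodule I -> (exists f, I f /\ f <> 0) ->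
  exists l : nat, forall f, I f <-> exists r, f = (pi ^+ l)%:MP * r.
Proof.
move=> dvr I HI [f0 [If0 nz_f0]]; have [_ _ Imul _] := HI.
pose C c := exists2 f, I f & exists m, f@_m = c.
have [|l [[u uU [f If [m fm]]] dvdC]] := uniformizer_min_valuation (C := C) dvr.
  exists f0@_(mlead f0).
    by exists f0 => //; exists (mlead f0).
  by rewrite mleadc_eq0; apply/eqP.
have Ipil : I (pi ^+ l)%:MP.
  by have := Imul (u^-1)%:MP _ (mp_Dsubmodule_coefC m HI If); rewrite -rmorphM /= fm mulKr.
exists l => f'; split=> [If'|[r ->]]; last by rewrite mulrC; apply: Imul.
have [r def_f'] : exists r : 'X_{1..n} -> V, forall m, f'@_m = pi ^+ l * r m.
  by apply: exists_cofactor_fun => m'; apply: dvdC; exists f' => //; exists m'.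
exists (\sum_(m <- msupp f') r m *: 'X_[m]).
rewrite mul_mpolyC scaler_sumr {1}(mpolyE f'); apply: eq_bigr => m' _.
by rewrite scalerA -def_f'.
Qed.

End Polynomials.

Theorem theorem3p2 (V : idomainType) (pi : V) (p n : nat) :
  is_DVR_uniformizer pi -> mixed_char pi p ->
  (* case R = V[[x_1, ..., x_n]] *)
  (forall I : pseries n V -> Prop,
     ps_Dsubmodule I -> (exists f, I f /\ f <> @ps0 n V) ->
     exists l : nat, forall f, I f <-> exists r, f = ps_mul (@psC n V (pi ^+ l)) r)
  /\
  (* case R = V[x_1, ..., x_n] *)
  (forall I : {mpoly V[n]} -> Prop,
     mp_Dsubmodule I -> (exists f, I f /\ f <> 0) ->
     exists l : nat, forall f, I f <-> exists r, f = (pi ^+ l)%:MP * r).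
Proof.
move=> dvr _.
by split; [exact: ps_Dsubmodule_eq_pi_ideal | exact: mp_Dsubmodule_eq_pi_ideal].
Qed.
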